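(* Let $L>1$ be a constant and $\mathcal S$ a set of relations. Then $|\Join_{S\in\mathcal S}S| = O(\mathrm{IN}^{\mathsf{DBP}(\mathcal S,L)})$.
   Context: A join query consists of a finite set $\mathcal S$ of relations; each $S$ is a finite set of tuples over attribute set $\mathsf{attr}(S)$; $\mathcal A=\bigcup_S\mathsf{attr}(S)$; the join $\Join_{S\in\mathcal S}S$ is the set of tuples $t$ over $\mathcal A$ with $\pi_{\mathsf{attr}(S)}(t)\in S$ for all $S$. $\mathrm{IN}=\sum_S|S|\ge2$, $\log=\log_{\mathrm{IN}}$. For $A\subseteq\mathsf{attr}(S)$, $v\in\pi_A(S)$: $\mathsf{deg}(v,S,A)=|\{t\in S:\pi_A(t)=v\}|$; $d_{S,A}=\max_{v\in\pi_A(S)}\mathsf{deg}(v,S,A)$ for $A\ne\emptyset$, $d_{S,\emptyset}=|S|$. DBP: a cover is a set $C$ of pairs $(S,A)$ with $S\in\mathcal S$, $A\subseteq\mathsf{attr}(S)$, $\bigcup_{(S,A)\in C}A=\mathcal A$. For a cover $C$, $O_{C,L}$ is the optimal value of: minimize $\sum_{a\in\mathcal A}v_a$ over real $v_a\ge0$ subject to $\sum_{a\in A'}v_a\ge\log\big(d_{\pi_A(S),A\setminus A'}/L\big)$ for all $(S,A)\in C$, $A'\subseteq A$. $\mathsf{DBP}(\mathcal S,L)=\min_C O_{C,L}$. $O(\cdot)$ hides factors depending only on the query schema and on $L$. *)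

From Stdlib Require Import Reals ClassicalEpsilon.
From mathcomp Require Import all_boot.

Set Implicit Arguments.
Unset Strict Implicit.
Unset Printing Implicit Defensive.

Definition is_glbR (E : R -> Prop) (m : R) : Prop :=
  (forall x, E x -> Rle m x) /\
  (forall b, (forall x, E x -> Rle b x) -> Rle b m).

(* The greatest lower bound of E (chosen classically; 0 if it does not exist).
   When E has a minimum, Rinf E is that minimum. *)
Definition Rinf (E : R -> Prop) : R :=
  epsilon (inhabits R0) (fun m => is_glbR E m).

(* Attributes form a finType A, values a finType V.  A tuple over an attribute
   set X is encoded as t : {ffun A -> option V} with t a <> None iff a \in X. *)

Section Rel.
Variables (A V : finType).

Definition tup := {ffun A -> option V}.

Definition proj (X : {set A}) (t : tup) : tup :=
  [ffun a => if a \in X then t a else None].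

Definition projrel (X : {set A}) (T : {set tup}) : {set tup} :=
  [set proj X t | t in T].

Definition deg (v : tup) (T : {set tup}) (X : {set A}) : nat :=
  #|[set t in T | proj X t == v]|.

Definition dmax (T : {set tup}) (X : {set A}) : nat :=
  if X == set0 then #|T| else \max_(v in projrel X T) deg v T X.

End Rel.

Section Query.
Variables (A I V : finType) (attr : I -> {set A}) (Rl : I -> {set tup A V}).

Definition well_formed : Prop :=
  forall i t, t \in Rl i -> forall a, (t a != None) = (a \in attr i).

Definition join : {set tup A V} :=
  [set t : tup A V | [forall a, t a != None] &&
                     [forall i, proj (attr i) t \in Rl i]].

Definition IN : nat := \sum_(i : I) #|Rl i|.

Definition logIN (x : R) : R := Rdiv (ln x) (ln (INR IN)).

Definition is_cover (C : {set I * {set A}}) : Prop :=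
  (forall p, p \in C -> p.2 \subset attr p.1) /\
  \bigcup_(p in C) p.2 = [set: A].

Definition sumR (X : {set A}) (v : A -> R) : R := \big[Rplus/R0]_(a in X) v a.

Definition feasible (C : {set I * {set A}}) (L : R) (v : A -> R) : Prop :=
  (forall a, Rle R0 (v a)) /\
  (forall p, p \in C -> forall X' : {set A}, X' \subset p.2 ->
     Rle (logIN (Rdiv (INR (dmax (projrel p.2 (Rl p.1)) (p.2 :\: X'))) L))
         (sumR X' v)).

Definition O_CL (C : {set I * {set A}}) (L : R) : R :=
  Rinf (fun x => exists v, feasible C L v /\ x = sumR [set: A] v).

Definition DBP (L : R) : R :=
  Rinf (fun x => exists C, is_cover C /\ x = O_CL C L).

End Query.

From Stdlib Require Import Reals Lra ClassicalEpsilon.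
From HB Require Import structures.
From mathcomp Require Import all_boot.

Set Implicit Arguments.
Unset Strict Implicit.
Unset Printing Implicit Defensive.

(* Enumerate a cover C as (S_1, B_1), ..., (S_k, B_k) and let U_j be the union
   of B_1, ..., B_j.  Every tuple of the projection of the join onto B_j :|: U_(j-1)
   is determined by its restriction to U_(j-1) together with its restriction to B_j,
   and the latter ranges over a degree set of pi_(B_j)(S_j) with respect to
   B_j :&: U_(j-1); hence |pi_(U_j)(join)| <= |pi_(U_(j-1))(join)| * d_j.  The LP
   constraint for the pair (S_j, B_j) and the new attributes B_j :\: U_(j-1) gives
   d_j <= L * IN^(sum of v over B_j :\: U_(j-1)), so multiplying out,
   |join| <= L^k * IN^(sum of v) for every feasible v.  Since k is at most the
   number of pairs (S, B), a schema constant, taking infima over v and C yields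
   the bound with c = L^#|I * {set A}|. *)

Section Projections.
Variables (A V : finType).
Implicit Types (X Y : {set A}) (t : tup A V) (T : {set tup A V}).

Lemma proj_proj X Y t : proj X (proj Y t) = proj (X :&: Y) t.
Proof. by apply/ffunP => a; rewrite !ffunE inE; case: (a \in X); case: (a \in Y). Qed.

Lemma proj_setT t : proj setT t = t.
Proof. by apply/ffunP => a; rewrite ffunE inE. Qed.

Lemma proj_set0 t : proj set0 t = [ffun => None].
Proof. by apply/ffunP => a; rewrite !ffunE inE. Qed.

Lemma card_projrel_set0 T : (#|projrel set0 T| <= 1)%N.
Proof.
rewrite -(cards1 ([ffun => None] : tup A V)); apply: subset_leq_card.
by apply/subsetP => _ /imsetP[t _ ->]; rewrite proj_set0 set11.
Qed.

Lemma deg_le_dmax t T X : (deg t T X <= dmax T X)%N.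
Proof.
rewrite /dmax /deg; case: ifP => _.
  by apply: subset_leq_card; apply/subsetP => u; rewrite inE => /andP[].
have [tT|tNT] := boolP (t \in projrel X T); first exact: leq_bigmax_cond.
suff -> : [set u in T | proj X u == t] = set0 by rewrite cards0.
apply/setP => u; rewrite !inE; apply/negP => /andP[uT /eqP ut].
by case/negP: tNT; apply/imsetP; exists u.
Qed.

Lemma dmax_le_card T X : (dmax T X <= #|T|)%N.
Proof.
rewrite /dmax; case: ifP => // _; apply/bigmax_leqP => t _.
by apply: subset_leq_card; apply/subsetP => u; rewrite inE => /andP[].
Qed.

Lemma dmax_projrel_id T X : (dmax (projrel X T) X <= 1)%N.
Proof.
have projK t : t \in projrel X T -> proj X t = t.
  by case/imsetP=> u _ ->; rewrite proj_proj setIid.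
rewrite /dmax; case: ifP => [/eqP ->|_]; first exact: card_projrel_set0.
apply/bigmax_leqP => t _; rewrite -(cards1 t); apply: subset_leq_card.
by apply/subsetP => u; rewrite !inE => /andP[/projK -> ->].
Qed.

End Projections.

Section JoinProjections.
Variables (A I V : finType) (attr : I -> {set A}) (Rl : I -> {set tup A V}).

Definition join_proj (U : {set A}) : {set tup A V} := projrel U (join attr Rl).

Lemma join_proj_setT : join_proj setT = join attr Rl.
Proof.
apply/setP => t; apply/imsetP/idP => [[u uJ ->]|tJ]; first by rewrite proj_setT.
by exists t; rewrite ?proj_setT.
Qed.

(* Grouping the tuples by their restriction to U, each group injects via
   proj B into a degree set of pi_B(Rl i). *)
Lemma card_join_proj_setU (U B : {set A}) i : B \subset attr i ->
  (#|join_proj (B :|: U)| <= #|join_proj U| * dmax (projrel B (Rl i)) (B :&: U))%N.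
Proof.
move=> sBi; set d := dmax _ _.
rewrite -sum1_card (partition_big_imset (proj U)) /=.
apply: (@leq_trans (\sum_(y in proj U @: join_proj (B :|: U)) d)); last first.
  rewrite sum_nat_const leq_mul2r; apply/orP; right.
  apply: subset_leq_card; apply/subsetP => z /imsetP[x /imsetP[t tJ ->] ->].
  by apply/imsetP; exists t; rewrite // proj_proj setKU.
apply: leq_sum => y _; rewrite sum1_card.
set F := (X in #|X|).
have projB_inj : {in F &, injective (proj B)}.
  move=> _ _ /andP[/imsetP[t _ ->] /eqP ty] /andP[/imsetP[t' _ ->] /eqP t'y] eB.
  apply/ffunP => a; move: (congr1 (fun f : tup A V => f a) eB).
  move: (congr1 (fun f : tup A V => f a) (etrans ty (esym t'y))).
  by rewrite !ffunE !inE; case: (a \in B); case: (a \in U).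
rewrite -(card_in_imset projB_inj); apply: leq_trans (deg_le_dmax (proj B y) _ _).
apply: subset_leq_card; apply/subsetP => _ /imsetP[_ /andP[/imsetP[t tJ ->] /eqP ty] ->].
rewrite inE -ty !proj_proj; apply/andP; split; last first.
  by apply/eqP; congr proj; apply/setP => a; rewrite !inE; case: (a \in U); case: (a \in B).
apply/imsetP; exists (proj (attr i) t).
  by move: tJ; rewrite inE => /andP[_ /forallP]; apply.
rewrite proj_proj; congr proj; apply/setP => a; rewrite !inE.
by case: (boolP (a \in B)) => //= /(subsetP sBi) ->.
Qed.

Lemma is_cover_attr : \bigcup_i attr i = setT -> is_cover attr [set (i, attr i) | i : I].
Proof.
move=> attr_cov; split=> [_ /imsetP[i _ ->] //|]; apply/setP => a; rewrite inE.
have /bigcupP[i _ ai] : a \in \bigcup_i attr i by rewrite attr_cov inE.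
by apply/bigcupP; exists (i, attr i); rewrite ?imset_f.
Qed.

Lemma card_le_IN i : (#|Rl i| <= IN Rl)%N.
Proof. by rewrite /IN (bigD1 i) //= leq_addr. Qed.

(* The nat form of the LP constraints at the all-ones point. *)
Lemma dmax_projrel_le_expn (B X : {set A}) i :
  (dmax (projrel B (Rl i)) (B :\: X) <= IN Rl ^ #|X|)%N.
Proof.
have [->|XN0] := eqVneq X set0; first by rewrite setD0 cards0 dmax_projrel_id.
have dmax_le_IN : (dmax (projrel B (Rl i)) (B :\: X) <= IN Rl)%N.
  by rewrite (leq_trans (dmax_le_card _ _)) // (leq_trans (leq_imset_card _ _)) ?card_le_IN.
have [IN0|IN_gt0] := posnP (IN Rl); first by move: dmax_le_IN; rewrite IN0 leqn0 => /eqP ->.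
by rewrite (leq_trans dmax_le_IN) // -{1}(expn1 (IN Rl)) leq_pexp2l // card_gt0.
Qed.

End JoinProjections.

Local Open Scope R_scope.

HB.instance Definition _ :=
  Monoid.isComLaw.Build R R0 Rplus (fun x y z => esym (Rplus_assoc x y z)) Rplus_comm Rplus_0_l.

Lemma sumR_setU (A : finType) (U B : {set A}) (v : A -> R) :
  sumR (B :|: U) v = sumR U v + sumR (B :\: U) v.
Proof.
rewrite /sumR (big_setID U); congr (_ + _); apply: eq_bigl => a; rewrite !inE;
  by case: (a \in U); case: (a \in B).
Qed.

Lemma sumR1 (A : finType) (X : {set A}) : sumR X (fun _ => 1) = INR #|X|.
Proof. by rewrite -sum1_card /sumR (big_morph INR plus_INR (erefl (INR 0))). Qed.

Lemma INR_expn (m n : nat) : INR (m ^ n) = INR m ^ n.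
Proof. by elim: n => [|n IHn]; rewrite ?expn0 // expnS mult_INR IHn. Qed.

Lemma Rinf_ge (E : R -> Prop) (b x0 : R) :
  E x0 -> (forall x, E x -> b <= x) -> b <= Rinf E.
Proof.
move=> Ex0 bE.
have [m [ub_m lub_m]] : {m | is_lub (fun y => E (- y)) m}.
  apply: completeness; last by exists (- x0); rewrite Ropp_involutive.
  by exists (- b) => y /bE; lra.
have glb_m : is_glbR E (- m).
  split=> [x Ex|c lb_c]; first by have := ub_m (- x); rewrite Ropp_involutive => /(_ Ex); lra.
  suff : m <= - c by lra.
  by apply: lub_m => y /lb_c; lra.
have [_] : is_glbR E (Rinf E) by apply: (epsilon_spec (inhabits R0) (is_glbR E)); exists (- m).
exact.
Qed.

Lemma Rlog_le_of_le_Rpower (b x s : R) :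
  1 < b -> 0 < x -> x <= Rpower b s -> Rlog b x <= s.
Proof.
move=> b_gt1 x_gt0 x_le; apply: Rnot_lt_le => s_lt.
by have := Rpower_lt _ _ _ b_gt1 s_lt; rewrite Rpower_Rlog //; lra.
Qed.

Lemma le_Rpower_of_Rlog_le (b x s : R) :
  1 < b -> 0 <= x -> Rlog b x <= s -> x <= Rpower b s.
Proof.
move=> b_gt1 x_ge0 log_le; have [x_gt0|<-] := Rle_lt_or_eq_dec _ _ x_ge0.
  rewrite -[x in x <= _](Rpower_Rlog b x); try lra.
  by apply: Rle_Rpower; lra.
by left; apply: exp_pos.
Qed.

(* Stdlib's [ln] is 0 on nonpositive arguments, so no positivity is needed. *)
Lemma Rlog_le0 (b x : R) : 1 < b -> x <= 1 -> Rlog b x <= 0.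
Proof.
move=> b_gt1 x_le1.
have lnb_gt0 : 0 < ln b by rewrite -ln_1; apply: ln_increasing; lra.
suff : ln x <= 0 by rewrite /Rlog /Rdiv => ?; have := Rinv_0_lt_compat _ lnb_gt0; nra.
have [x_gt0|x_le0] := Rlt_le_dec 0 x.
  have [x_lt1|->] := Rle_lt_or_eq_dec _ _ x_le1; last by rewrite ln_1; lra.
  by rewrite -ln_1; left; apply: ln_increasing.
by rewrite /ln; case: (Rlt_dec 0 x) => [?|_]; [exfalso; lra | right].
Qed.

Lemma INR_gt1 (n : nat) : (2 <= n)%N -> 1 < INR n.
Proof. by move=> /leP /(le_INR 2) /=; lra. Qed.

Lemma logINE (A I V : finType) (Rl : I -> {set tup A V}) (x : R) :
  logIN Rl x = Rlog (INR (IN Rl)) x.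
Proof. by []. Qed.

Section Counting.
Variables (A I V : finType) (attr : I -> {set A}) (Rl : I -> {set tup A V}) (L : R).
Hypotheses (L_gt1 : 1 < L) (IN_ge2 : (2 <= IN Rl)%N).

Let INR_IN_gt1 : 1 < INR (IN Rl) := INR_gt1 IN_ge2.

(* Every LP is feasible, so the [Rinf] in [O_CL] is a genuine infimum. *)
Lemma feasible_ones (C : {set I * {set A}}) : feasible Rl C L (fun _ => 1).
Proof.
split=> [_ | p _ X _]; first lra.
rewrite logINE sumR1; set d := INR (dmax _ _).
have dL_le_d : d / L <= d.
  rewrite /Rdiv -[X in _ <= X]Rmult_1_r; apply: Rmult_le_compat_l; first exact: pos_INR.
  by rewrite -Rinv_1; apply: Rinv_le_contravar; lra.
have dL_le : d / L <= Rpower (INR (IN Rl)) (INR #|X|).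
  rewrite Rpower_pow -?INR_expn; last lra.
  exact: Rle_trans dL_le_d (le_INR _ _ (elimT leP (dmax_projrel_le_expn Rl p.2 X p.1))).
have [dL_le1|dL_gt1] := Rle_lt_dec (d / L) 1.
  by apply: Rle_trans (Rlog_le0 INR_IN_gt1 dL_le1) (pos_INR _).
by apply: Rlog_le_of_le_Rpower; lra.
Qed.

Variables (C : {set I * {set A}}) (v : A -> R).
Hypotheses (C_sub : forall p, p \in C -> p.2 \subset attr p.1) (v_feas : feasible Rl C L v).

Lemma dmax_le_Rpower p (X : {set A}) : p \in C -> X \subset p.2 ->
  INR (dmax (projrel p.2 (Rl p.1)) (p.2 :\: X)) <= L * Rpower (INR (IN Rl)) (sumR X v).
Proof.
move=> pC sXp; set d := INR _.
have L_gt0 : 0 < L by lra.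
have dL_ge0 : 0 <= d / L.
  by apply: Rmult_le_pos; [exact: pos_INR | left; apply: Rinv_0_lt_compat].
have := v_feas.2 p pC X sXp; rewrite logINE => /(le_Rpower_of_Rlog_le INR_IN_gt1 dL_ge0) dL_le.
have -> : d = L * (d / L) by field; lra.
by apply: Rmult_le_compat_l; lra.
Qed.

Lemma card_join_proj_bigcup (s : seq (I * {set A})) : all (mem C) s ->
  INR #|join_proj attr Rl (\bigcup_(p <- s) p.2)| <=
  L ^ size s * Rpower (INR (IN Rl)) (sumR (\bigcup_(p <- s) p.2) v).
Proof.
elim: s => [_|p s IHs /andP[pC /IHs {}IHs]].
  rewrite big_nil /sumR big_set0 Rpower_O /=; last lra.
  by rewrite Rmult_1_l; apply: (le_INR _ 1); apply/leP; apply: card_projrel_set0.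
rewrite big_cons /=; set U := \bigcup_(q <- s) q.2 in IHs *.
have := dmax_le_Rpower pC (subsetDl p.2 U); rewrite setDDr setDv set0U.
set d := dmax _ _ => d_le.
apply: Rle_trans (le_INR _ _ (elimT leP (card_join_proj_setU Rl U (C_sub pC)))) _.
rewrite mult_INR sumR_setU Rpower_plus.
have J_ge0 := pos_INR #|join_proj attr Rl U|; have d_ge0 := pos_INR d.
have -> : L * L ^ size s * (Rpower (INR (IN Rl)) (sumR U v) * Rpower (INR (IN Rl)) (sumR (p.2 :\: U) v))
  = (L ^ size s * Rpower (INR (IN Rl)) (sumR U v)) * (L * Rpower (INR (IN Rl)) (sumR (p.2 :\: U) v)).
  by ring.
exact: Rmult_le_compat.
Qed.

Lemma card_join_le_Rpower : \bigcup_(p in C) p.2 = setT ->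
  INR #|join attr Rl| <= L ^ #|C| * Rpower (INR (IN Rl)) (sumR setT v).
Proof.
move=> C_cov; have /card_join_proj_bigcup : all (mem C) (enum C).
  by apply/allP => p; rewrite mem_enum.
by rewrite big_enum /= C_cov join_proj_setT -cardE.
Qed.

End Counting.

Lemma Rlog_card_join_le_DBP (A I V : finType) (attr : I -> {set A})
    (Rl : I -> {set tup A V}) (L : R) :
  \bigcup_i attr i = setT -> 1 < L -> (2 <= IN Rl)%N -> (0 < #|join attr Rl|)%N ->
  Rlog (INR (IN Rl)) (INR #|join attr Rl| / L ^ #|{: I * {set A}}|) <= DBP attr Rl L.
Proof.
move=> attr_cov L_gt1 IN_ge2 J_gt0.
have LN_gt0 : 0 < L ^ #|{: I * {set A}}| by apply: pow_lt; lra.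
set x := _ / _.
have x_gt0 : 0 < x by apply: Rdiv_lt_0_compat => //; apply: (lt_INR 0); apply/ltP.
have x_le_sum C v : is_cover attr C -> feasible Rl C L v -> Rlog (INR (IN Rl)) x <= sumR setT v.
  move=> [C_sub C_cov] v_feas; apply: Rlog_le_of_le_Rpower (INR_gt1 IN_ge2) x_gt0 _.
  have P_gt0 : 0 < Rpower (INR (IN Rl)) (sumR setT v) by apply: exp_pos.
  have LC_le : L ^ #|C| <= L ^ #|{: I * {set A}}|.
    by apply: Rle_pow; [lra | apply/leP; apply: max_card].
  have := card_join_le_Rpower L_gt1 IN_ge2 C_sub v_feas C_cov.
  rewrite /x /Rdiv => J_le; apply: (Rmult_le_reg_l (L ^ #|{: I * {set A}}|)) => //.
  have -> : forall y, L ^ #|{: I * {set A}}| * (y * / L ^ #|{: I * {set A}}|) = y.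
    by move=> y; field; lra.
  by apply: Rle_trans J_le _; apply: Rmult_le_compat_r; lra.
have x_le_O C : is_cover attr C -> Rlog (INR (IN Rl)) x <= O_CL Rl C L.
  move=> C_cov; apply: (Rinf_ge (x0 := sumR setT (fun _ => 1))).
    by exists (fun _ => 1); split=> //; apply: feasible_ones.
  by move=> _ [v [v_feas ->]]; apply: x_le_sum v_feas.
apply: (Rinf_ge (x0 := O_CL Rl [set (i, attr i) | i : I] L)).
  by exists [set (i, attr i) | i : I]; split=> //; apply: is_cover_attr.
by move=> _ [C [C_cov ->]]; apply: x_le_O.
Qed.

Theorem proposition5p1 (A I : finType) (attr : I -> {set A})
  (hcov : \bigcup_(i : I) attr i = [set: A])
  (L : R) (hL : Rlt R1 L) :
  exists c : R, forall (V : finType) (Rl : I -> {set tup A V}),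
    well_formed attr Rl ->
    (2 <= IN Rl)%N ->
    Rle (INR #|join attr Rl|)
        (Rmult c (Rpower (INR (IN Rl)) (DBP attr Rl L))).
Proof.
exists (L ^ #|{: I * {set A}}|) => V Rl _ IN_ge2.
have LN_gt0 : 0 < L ^ #|{: I * {set A}}| by apply: pow_lt; lra.
have [J0|J_gt0] := posnP #|join attr Rl|.
  by rewrite J0 /=; left; apply: Rmult_lt_0_compat => //; apply: exp_pos.
have J_pos : 0 < INR #|join attr Rl| by apply: (lt_INR 0); apply/ltP.
have := Rle_Rpower _ _ _ (Rlt_le _ _ (INR_gt1 IN_ge2))
  (Rlog_card_join_le_DBP hcov hL IN_ge2 J_gt0).
rewrite Rpower_Rlog; [|have := INR_gt1 IN_ge2; lra ..|by apply: Rdiv_lt_0_compat].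
move=> J_le; apply: (Rmult_le_reg_l (/ L ^ #|{: I * {set A}}|)); first exact: Rinv_0_lt_compat.
by rewrite -Rmult_assoc Rinv_l ?Rmult_1_l 1?Rmult_comm; lra.
Qed.
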